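(* Let $n\ge 4$ and let $R(F_n^1)$ be the complex Leibniz algebra with basis $\{h_1,h_2,e_1,\dots,e_n\}$ and nonzero products $[e_i,e_1]=e_{i+1}$ ($2\le i\le n-1$), $[e_1,h_2]=e_1$, $[h_2,e_1]=-e_1$, $[e_i,h_1]=e_i$ ($2\le i\le n$), $[e_i,h_2]=(i-1)e_i$ ($2\le i\le n$). A linear map $D$ on $R(F_n^1)$ is an anti-derivation iff there exist $\beta_1,\dots,\beta_{n+1},\gamma_1,\gamma_2\in\mathbb C$ with $$D(h_1)=\gamma_1h_1+\sum_{i=2}^n\beta_{i+1}e_i,\quad D(h_2)=\gamma_2h_1+\beta_2e_1+\sum_{i=2}^n(i-1)\beta_{i+1}e_i,$$ $$D(e_1)=\beta_1e_1+\sum_{i=3}^n\beta_ie_i,\quad D(e_i)=0\ (2\le i\le n).$$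
   Context: Leibniz algebras are right Leibniz over $\mathbb C$: $[x,[y,z]]=[[x,y],z]-[[x,z],y]$. Unlisted products are zero. An anti-derivation is a linear map $D$ with $D([x,y])=[D(x),y]-[D(y),x]$ for all $x,y$. *)

From HB Require Import structures.
From mathcomp Require Import all_boot all_order all_algebra.
From mathcomp Require Import complex.
From mathcomp Require Import Rstruct.
Set Implicit Arguments. Unset Strict Implicit. Unset Printing Implicit Defensive.
Import Order.TTheory GRing.Theory Num.Theory.
Local Open Scope ring_scope.

Notation CC := (Rdefinitions.R)[i].

(* The Leibniz algebra R(F_n^1), of dimension n+2, modelled as row vectors
   'rV[CC]_n.+2.  Coordinate 0 <-> h_1, coordinate 1 <-> h_2,
   coordinate i+1 <-> e_i (1 <= i <= n). *)
Section Alg.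
Variable n : nat.

Definition vH1 : 'rV[CC]_n.+2 := delta_mx 0 (inord 0).
Definition vH2 : 'rV[CC]_n.+2 := delta_mx 0 (inord 1).
Definition vE (i : nat) : 'rV[CC]_n.+2 := delta_mx 0 (inord i.+1).

Definition bb (a b : 'I_n.+2) : 'rV[CC]_n.+2 :=
  let i := (a : nat).-1 in
  if [&& 3 <= a, (b : nat) == 2 & i <= n.-1]%N then vE i.+1
  else if ((a : nat) == 2) && ((b : nat) == 1) then vE 1
  else if ((a : nat) == 1) && ((b : nat) == 2) then - vE 1
  else if (3 <= a)%N && ((b : nat) == 0) then vE i
  else if (3 <= a)%N && ((b : nat) == 1) then (i.-1)%:R *: vE i
  else 0.

Definition lbr (x y : 'rV[CC]_n.+2) : 'rV[CC]_n.+2 :=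
  \sum_(a < n.+2) \sum_(b < n.+2) (x 0 a * y 0 b) *: bb a b.

Definition anti_derivation (D : {linear 'rV[CC]_n.+2 -> 'rV[CC]_n.+2}) : Prop :=
  forall x y, D (lbr x y) = lbr (D x) y - lbr (D y) x.

End Alg.

(* Both sides of the anti-derivation identity are bilinear in (x, y), so it
   suffices to check it on pairs of basis vectors.  Right multiplication by e_i
   (i >= 2) is zero, and the pairs (h_1, e_i), (e_i, h_1) force D e_i = 0; hence
   D kills span{e_2, ..., e_n}, which contains the product of any two basis
   vectors except [e_1, h_2] = e_1 and [h_2, e_1] = - e_1.  What remains are
   three vector equations between D h_1, D h_2 and D e_1, coming from the pairs
   (h_1, e_1), (h_1, h_2) and (e_1, h_2); read coordinatewise, they say exactly
   that these three images have the stated shape. *)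

From HB Require Import structures.
From mathcomp Require Import all_boot all_order all_algebra complex Rstruct.
From mathcomp Require Import sesquilinear zify ring.
Set Implicit Arguments.
Unset Strict Implicit.
Unset Printing Implicit Defensive.
Import GRing.Theory.
Local Open Scope ring_scope.

Section AntiDerivationBasis.
Variables (R : comNzRingType) (m : nat).
Variable br : {bilinear 'rV[R]_m -> 'rV[R]_m -> 'rV[R]_m}.
Variable D : {linear 'rV[R]_m -> 'rV[R]_m}.

Lemma bilinear_sumZ (c d : 'I_m -> R) (u v : 'I_m -> 'rV[R]_m) :
  br (\sum_a c a *: u a) (\sum_b d b *: v b) =
  \sum_a \sum_b (c a * d b) *: br (u a) (v b).
Proof.
rewrite linear_sumlz; apply: eq_bigr => a _.
rewrite linearZl_LR linear_sumr scaler_sumr; apply: eq_bigr => b _.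
by rewrite linearZr_LR scalerA.
Qed.

Lemma linear_row_sum_delta (x : 'rV[R]_m) : D x = \sum_a x 0 a *: D (delta_mx 0 a).
Proof. by rewrite {1}[x]row_sum_delta linear_sum; apply: eq_bigr => a _; rewrite linearZ. Qed.

Lemma anti_derivation_basis :
  (forall a b, D (br (delta_mx 0 a) (delta_mx 0 b)) =
     br (D (delta_mx 0 a)) (delta_mx 0 b) - br (D (delta_mx 0 b)) (delta_mx 0 a)) ->
  forall x y, D (br x y) = br (D x) y - br (D y) x.
Proof.
move=> Dbasis x y.
have expand u v : br (D u) v = \sum_a \sum_b (u 0 a * v 0 b) *: br (D 'e_a) 'e_b.
  by rewrite linear_row_sum_delta {1}[v]row_sum_delta bilinear_sumZ.
rewrite {1}[x]row_sum_delta {1}[y]row_sum_delta bilinear_sumZ linear_sum !expand.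
rewrite [X in _ = _ - X]exchange_big -sumrB; apply: eq_bigr => a _.
rewrite linear_sum -sumrB; apply: eq_bigr => b _.
by rewrite linearZ /= Dbasis scalerBr [y 0 b * _]mulrC.
Qed.

End AntiDerivationBasis.

Lemma lbr_is_bilinear n : bilinear_for
  (GRing.Scale.Law.clone _ _ *:%R _) (GRing.Scale.Law.clone _ _ *:%R _) (@lbr n).
Proof.
split=> [y|x] c u v /=; rewrite /lbr scaler_sumr -big_split; apply: eq_bigr => a _;
  rewrite scaler_sumr -big_split; apply: eq_bigr => b _;
  by rewrite !mxE scalerA /= -scalerDl; congr (_ *: _); ring.
Qed.

HB.instance Definition _ n := bilinear_isBilinear.Build CC
  'rV[CC]_n.+2 'rV[CC]_n.+2 'rV[CC]_n.+2 _ _ (@lbr n) (lbr_is_bilinear n).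

Section Coordinates.
Variable n : nat.
(* Otherwise [vE n 1] is not e_1: [inord] wraps out-of-range indices to 0. *)
Hypothesis n_gt0 : (0 < n)%N.
Implicit Types (x : 'rV[CC]_n.+2) (a b j : 'I_n.+2).

Lemma delta_entry a j : (delta_mx 0 a : 'rV[CC]_n.+2) 0 j = (j == a)%:R.
Proof. by rewrite mxE eqxx. Qed.

Lemma entry_inord x j : x 0 j = x 0 (inord j).
Proof. by rewrite inord_val. Qed.

Lemma vE_entry i j : (i < n.+1)%N -> vE n i 0 j = (j == i.+1 :> nat)%:R.
Proof. by move=> lt_i_n; rewrite delta_entry -val_eqE /= inordK. Qed.

Lemma vH1_entry j : vH1 n 0 j = (j == 0%N :> nat)%:R.
Proof. by rewrite delta_entry -val_eqE /= inordK. Qed.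

Lemma vH2_entry j : vH2 n 0 j = (j == 1%N :> nat)%:R.
Proof. by rewrite delta_entry -val_eqE /= inordK. Qed.

Lemma vE_pred a : (0 < a)%N -> vE n a.-1 = delta_mx 0 a.
Proof. by move=> a_gt0; rewrite /vE prednK ?inord_val. Qed.

Lemma sum_vE_entry (f : nat -> CC) k j :
  (\sum_(k <= i < n.+1) f i *: vE n i) 0 j = if (k < j)%N then f j.-1 else 0.
Proof.
rewrite summxE; case: j => [[|j] lt_j] /=.
  rewrite big1_seq // => i /andP[_]; rewrite mem_index_iota mxE => lt_i.
  by rewrite vE_entry ?mulr0 //; lia.
rewrite (eq_big_nat _ _ (F2 := fun i => if i == j then f i else 0)); last first.
  by move=> i lt_i; rewrite mxE vE_entry ?eqSS ?mulr_natr ?mulrb 1?eq_sym //; lia.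
by rewrite -(big_mkcond (fun i => i == j)) big_nat1_eq ltnS (_ : j <= n)%N ?andbT.
Qed.

Lemma lbr_delta_entry x b j : lbr x (delta_mx 0 b) 0 j = \sum_a x 0 a * bb a b 0 j.
Proof.
rewrite summxE; apply: eq_bigr => a _.
rewrite summxE (big_only1 b) // => [|c ne_cb _]; rewrite mxE delta_entry.
  by rewrite eqxx mulr1.
by rewrite (negPf ne_cb) mulr0 mul0r.
Qed.

Lemma lbr_entry_single x b j a0 :
  (forall a, (a : nat) != a0 -> bb a b 0 j = 0) ->
  lbr x (delta_mx 0 b) 0 j = x 0 a0 * bb a0 b 0 j.
Proof.
by move=> bb0; rewrite lbr_delta_entry (big_only1 a0) // => a /bb0 ->; rewrite mulr0.
Qed.

Lemma bb_vH1_entry a j : bb a (inord 0) 0 j = ((3 <= a)%N && (j == a :> nat))%:R.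
Proof.
rewrite /bb inordK //= !andbF !andbT; case: ifP => lt2; last by rewrite mxE.
by rewrite vE_pred ?delta_entry //; lia.
Qed.

Lemma bb_vH2_entry a j : bb a (inord 1) 0 j =
  if a == 2%N :> nat then (j == 2%N :> nat)%:R
  else if (3 <= a)%N then a.-2%:R * (j == a :> nat)%:R else 0.
Proof.
rewrite /bb inordK //= ?andbF ?andFb ?andbT /=.
case: ifP => a2; first by rewrite vE_entry.
case: ifP => lt2; last by rewrite mxE.
by rewrite mxE vE_pred ?delta_entry //; lia.
Qed.

Lemma bb_vE1_entry a j : bb a (inord 2) 0 j =
  if (3 <= a <= n)%N then (j == a.+1 :> nat)%:R
  else if a == 1%N :> nat then - (j == 2%N :> nat)%:R else 0.
Proof.
rewrite /bb inordK //= ?andbF ?andFb ?andbT.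
have -> : ((2 < a) && (a.-1 <= n.-1))%N = (3 <= a <= n)%N by lia.
case: ifP => a3n; first by rewrite vE_entry prednK //; lia.
case: ifP => a1; last by rewrite mxE.
by rewrite mxE vE_entry.
Qed.

Lemma lbr_vH1_entry x j : lbr x (vH1 n) 0 j = if (3 <= j)%N then x 0 j else 0.
Proof.
rewrite /vH1 (lbr_entry_single _ (a0 := j)) => [|a ne_aj]; rewrite bb_vH1_entry.
  by rewrite eqxx andbT; case: ifP; rewrite ?mulr1 ?mulr0.
by rewrite eq_sym (negPf ne_aj) andbF.
Qed.

Lemma lbr_vH2_entry x j : lbr x (vH2 n) 0 j =
  if j == 2%N :> nat then x 0 j else if (3 <= j)%N then j.-2%:R * x 0 j else 0.
Proof.
rewrite /vH2 (lbr_entry_single _ (a0 := j)) => [|a /negPf ne_aj]; rewrite bb_vH2_entry.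
  rewrite eqxx; case: ifP => [j2|_]; first by rewrite j2 mulr1.
  by case: ifP; rewrite ?mulr1 ?mulr0 // mulrC.
rewrite (eq_sym (j : nat) a) ne_aj mulr0 if_same.
by case: ifP => // a2; rewrite (_ : (j == 2%N :> nat) = false) //; lia.
Qed.

Lemma lbr_vE1_entry x j : lbr x (vE n 1) 0 j =
  if j == 2%N :> nat then - x 0 (inord 1)
  else if (4 <= j)%N then x 0 (inord j.-1) else 0.
Proof.
have lt_j := ltn_ord j.
case: ifP => j2.
  rewrite /vE (lbr_entry_single _ (a0 := inord 1)) => [|a]; rewrite bb_vE1_entry ?inordK //=.
    by rewrite j2 mulrN mulr1.
  move=> /negPf ne_a1; rewrite ne_a1.
  by case: ifP => // a3; rewrite (_ : (j == a.+1 :> nat) = false) //; lia.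
case: ifP => j4.
  rewrite /vE (lbr_entry_single _ (a0 := inord j.-1)) => [|a];
    rewrite bb_vE1_entry ?inordK //=; try lia.
    by rewrite (_ : (3 <= j.-1 <= n)%N) ?prednK ?eqxx ?mulr1 //; lia.
  move=> ne_a; rewrite j2 mulr0n oppr0 if_same.
  by case: ifP => // _; rewrite (_ : (j == a.+1 :> nat) = false) //; lia.
rewrite /vE lbr_delta_entry big1 // => a _; rewrite bb_vE1_entry j2 mulr0n oppr0 if_same.
case: ifP => [a3|_]; last by rewrite mulr0.
by rewrite (_ : (j == a.+1 :> nat) = false) ?mulr0 //; lia.
Qed.

Lemma lbr_vE x i : (2 <= i <= n)%N -> lbr x (vE n i) = 0.
Proof.
move=> i_range; apply/rowP => j.
rewrite /vE lbr_delta_entry big1 => [|a _]; first by rewrite mxE.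
by rewrite /bb inordK ?ifF ?mxE ?mulr0 //; lia.
Qed.

Lemma basis_cases b :
  [\/ delta_mx 0 b = vH1 n, delta_mx 0 b = vH2 n, delta_mx 0 b = vE n 1
     | exists2 i, (2 <= i <= n)%N & delta_mx 0 b = vE n i].
Proof.
rewrite /vH1 /vH2 /vE.
case: b => [[|[|[|b]]] lt_b]; rewrite -[Ordinal lt_b]inord_val /=.
- exact: Or41.
- exact: Or42.
- exact: Or43.
- by apply: Or44; exists b.+2; rewrite //=; lia.
Qed.

Definition in_span_e2n (v : 'rV[CC]_n.+2) := forall j : 'I_n.+2, (j <= 2)%N -> v 0 j = 0.

Lemma vE_in_span_e2n i : (2 <= i <= n)%N -> in_span_e2n (vE n i).
Proof.
move=> i_range j le_j2; rewrite vE_entry; last by lia.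
by rewrite (_ : (j == i.+1 :> nat) = false) //; lia.
Qed.

Lemma lbr_vH1_in_span_e2n x : in_span_e2n (lbr x (vH1 n)).
Proof. by move=> j le_j2; rewrite lbr_vH1_entry ifF //; lia. Qed.

Lemma lbr_vH2_in_span_e2n x : x 0 (inord 2) = 0 -> in_span_e2n (lbr x (vH2 n)).
Proof.
move=> x2 j le_j2; rewrite lbr_vH2_entry.
by case: ifP => [j2|_]; [rewrite entry_inord (eqP j2) | rewrite ifF //; lia].
Qed.

Lemma lbr_vE1_in_span_e2n x : x 0 (inord 1) = 0 -> in_span_e2n (lbr x (vE n 1)).
Proof.
move=> x1 j le_j2; rewrite lbr_vE1_entry x1 oppr0.
by case: ifP => // _; rewrite ifF //; lia.
Qed.

Lemma linear_span_e2n_eq0 (D : {linear 'rV[CC]_n.+2 -> 'rV[CC]_n.+2}) v :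
  (forall i, (2 <= i <= n)%N -> D (vE n i) = 0) -> in_span_e2n v -> D v = 0.
Proof.
move=> De v_span; rewrite [v]row_sum_delta linear_sum big1 // => j _.
rewrite linearZ /=; case: (leqP j 2) => [le_j2 | lt2j]; first by rewrite v_span ?scale0r.
by rewrite -vE_pred ?De ?scaler0 //; have := ltn_ord j; lia.
Qed.

Lemma lbr_vE_vH1 i : (2 <= i <= n)%N -> lbr (vE n i) (vH1 n) = vE n i.
Proof.
move=> i_range; apply/rowP => j; rewrite lbr_vH1_entry vE_entry; last by lia.
by case: ifP => // lt2j; rewrite (_ : (j == i.+1 :> nat) = false) //; lia.
Qed.

Lemma lbr_vH1_vH2 : lbr (vH1 n) (vH2 n) = 0.
Proof.
apply/rowP => j; rewrite lbr_vH2_entry vH1_entry mxE.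
case: ifP => [/eqP -> //|_]; case: ifP => // lt2j.
by rewrite (_ : (j == 0%N :> nat) = false) ?mulr0 //; lia.
Qed.

Lemma lbr_vH1_vE1 : lbr (vH1 n) (vE n 1) = 0.
Proof.
apply/rowP => j; rewrite lbr_vE1_entry !vH1_entry inordK //= oppr0 mxE.
case: ifP => // _; case: ifP => // lt3j.
have lt_j := ltn_ord j; rewrite inordK; last by lia.
by rewrite (_ : (j.-1 == 0%N) = false) //; lia.
Qed.

Lemma lbr_vE1_vH2 : lbr (vE n 1) (vH2 n) = vE n 1.
Proof.
apply/rowP => j; rewrite lbr_vH2_entry !vE_entry //.
by case: eqP => // _; case: ifP; rewrite ?mulr0.
Qed.

Lemma lbr_vH2_vE1 : lbr (vH2 n) (vE n 1) = - vE n 1.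
Proof.
apply/rowP => j; rewrite lbr_vE1_entry !vH2_entry inordK //= mxE vE_entry //.
case: ifP => // _; rewrite oppr0; case: ifP => // lt3j.
have lt_j := ltn_ord j; rewrite inordK; last by lia.
by rewrite (_ : (j.-1 == 1%N) = false) //; lia.
Qed.

End Coordinates.

Definition generator_identities n (X Y Z : 'rV[CC]_n.+2) : Prop :=
  [/\ lbr X (vE n 1) = lbr Z (vH1 n), lbr X (vH2 n) = lbr Y (vH1 n)
    & Z = lbr Z (vH2 n) - lbr Y (vE n 1)].

Section Generators.
Variable n : nat.
Hypothesis n_gt0 : (0 < n)%N.
Variable D : {linear 'rV[CC]_n.+2 -> 'rV[CC]_n.+2}.

Lemma anti_derivation_generatorsP :
  anti_derivation D <->
  (forall i, (2 <= i <= n)%N -> D (vE n i) = 0) /\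
  generator_identities (D (vH1 n)) (D (vH2 n)) (D (vE n 1)).
Proof.
split=> [antiD | [De [DA DB DC]]].
  split; [|split].
  - move=> i i_range; have := antiD (vE n i) (vH1 n).
    rewrite lbr_vE_vH1 // lbr_vE // subr0 => ->.
    have := antiD (vH1 n) (vE n i); rewrite !lbr_vE // linear0 sub0r.
    by move/eqP; rewrite eq_sym oppr_eq0 => /eqP.
  - by apply/eqP; rewrite -subr_eq0 -antiD lbr_vH1_vE1 // linear0.
  - by apply/eqP; rewrite -subr_eq0 -antiD lbr_vH1_vH2 // linear0.
  - by rewrite -antiD lbr_vE1_vH2.
apply: anti_derivation_basis => a b /=.
have kill (v : 'rV[CC]_n.+2) : in_span_e2n v -> D v = 0.
  exact: linear_span_e2n_eq0.
have vE_low i (j : 'I_n.+2) : (2 <= i <= n)%N -> (j <= 2)%N -> vE n i 0 j = 0.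
  by move=> i_range; apply: vE_in_span_e2n.
case: (basis_cases b) => [->|->|->|[k k_range ->]]; last first.
  by rewrite !lbr_vE // linear0 De // linear0l subrr.
all: case: (basis_cases a) => [->|->|->|[i i_range ->]].
- rewrite kill ?DA ?subrr //.
  by apply: lbr_vE1_in_span_e2n => //; rewrite vH1_entry inordK.
- by rewrite lbr_vH2_vE1 // linearN {1}DC opprB.
- rewrite kill ?subrr //.
  by apply: lbr_vE1_in_span_e2n => //; rewrite vE_entry ?inordK.
- rewrite kill; last by apply: lbr_vE1_in_span_e2n => //; rewrite vE_low ?inordK.
  by rewrite De // linear0l lbr_vE // subrr.
- rewrite kill ?DB ?subrr //.
  by apply: lbr_vH2_in_span_e2n => //; rewrite vH1_entry inordK.
- rewrite kill ?subrr //.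
  by apply: lbr_vH2_in_span_e2n => //; rewrite vH2_entry inordK.
- by rewrite lbr_vE1_vH2.
- rewrite kill; last by apply: lbr_vH2_in_span_e2n => //; rewrite vE_low ?inordK.
  by rewrite De // linear0l lbr_vE // subrr.
- by rewrite kill ?subrr //; apply: lbr_vH1_in_span_e2n.
- by rewrite kill ?DB ?subrr //; apply: lbr_vH1_in_span_e2n.
- by rewrite kill ?DA ?subrr //; apply: lbr_vH1_in_span_e2n.
- rewrite kill; last exact: lbr_vH1_in_span_e2n.
  by rewrite De // linear0l lbr_vE // subrr.
Qed.
End Generators.

Section Forms.
Variable n : nat.
Hypothesis n_gt0 : (0 < n)%N.
Implicit Types (beta : nat -> CC) (gamma : CC) (j : 'I_n.+2).

Definition antider_h1 beta gamma : 'rV[CC]_n.+2 :=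
  gamma *: vH1 n + \sum_(2 <= i < n.+1) beta i.+1 *: vE n i.

Definition antider_h2 beta gamma : 'rV[CC]_n.+2 :=
  gamma *: vH1 n + beta 2%N *: vE n 1
  + \sum_(2 <= i < n.+1) ((i.-1)%:R * beta i.+1) *: vE n i.

Definition antider_e1 beta : 'rV[CC]_n.+2 :=
  beta 1%N *: vE n 1 + \sum_(3 <= i < n.+1) beta i *: vE n i.

Lemma antider_h1_entry beta gamma j : antider_h1 beta gamma 0 j =
  if j == 0%N :> nat then gamma else if (3 <= j)%N then beta j else 0.
Proof.
rewrite 2!mxE vH1_entry sum_vE_entry //.
by case: j => [[|[|[|k]]] lt_k] /=; rewrite ?mulr1 ?mulr0 ?addr0 ?add0r.
Qed.

Lemma antider_h2_entry beta gamma j : antider_h2 beta gamma 0 j =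
  if j == 0%N :> nat then gamma else if j == 2%N :> nat then beta 2%N
  else if (3 <= j)%N then j.-2%:R * beta j else 0.
Proof.
rewrite 3!mxE vH1_entry mxE vE_entry // sum_vE_entry //.
by case: j => [[|[|[|k]]] lt_k] /=; rewrite ?mulr1 ?mulr0 ?addr0 ?add0r.
Qed.

Lemma antider_e1_entry beta j : antider_e1 beta 0 j =
  if j == 2%N :> nat then beta 1%N else if (4 <= j)%N then beta j.-1 else 0.
Proof.
rewrite 2!mxE vE_entry // sum_vE_entry //.
by case: j => [[|[|[|[|k]]]] lt_k] /=; rewrite ?mulr1 ?mulr0 ?addr0 ?add0r.
Qed.

End Forms.

Section Identities.
Variable n : nat.
Hypothesis n_ge2 : (2 <= n)%N.
Variables X Y Z : 'rV[CC]_n.+2.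

Let n_gt0 : (0 < n)%N := ltnW n_ge2.

Lemma identity_h1e1_coords : lbr X (vE n 1) = lbr Z (vH1 n) ->
  [/\ X 0 (inord 1) = 0, Z 0 (inord 3) = 0
    & forall k, (4 <= k < n.+2)%N -> Z 0 (inord k) = X 0 (inord k.-1)].
Proof.
move=> EA; have EAk k : (k < n.+2)%N ->
    (if k == 2%N then - X 0 (inord 1) else if (4 <= k)%N then X 0 (inord k.-1) else 0) =
    (if (3 <= k)%N then Z 0 (inord k) else 0).
  move=> lt_k; move/(congr1 (fun v : 'rV[CC]_n.+2 => v 0 (inord k))): EA.
  by rewrite lbr_vE1_entry // lbr_vH1_entry // inordK.
split.
- by apply/eqP; rewrite -oppr_eq0; apply/eqP; apply: (EAk 2%N n_gt0).
- exact: esym (EAk 3%N n_ge2).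
- move=> k /andP[lt3k lt_k]; have := EAk k lt_k.
  by rewrite lt3k (ltnW lt3k) ifF; [move-> | lia].
Qed.

Lemma identity_h1h2_coords : lbr X (vH2 n) = lbr Y (vH1 n) ->
    X 0 (inord 2) = 0 /\
  forall k, (3 <= k < n.+2)%N -> Y 0 (inord k) = k.-2%:R * X 0 (inord k).
Proof.
move=> EB; have EBk k : (k < n.+2)%N ->
    (if k == 2%N then X 0 (inord k) else if (3 <= k)%N then k.-2%:R * X 0 (inord k) else 0) =
    (if (3 <= k)%N then Y 0 (inord k) else 0).
  move=> lt_k; move/(congr1 (fun v : 'rV[CC]_n.+2 => v 0 (inord k))): EB.
  by rewrite lbr_vH2_entry // lbr_vH1_entry // inordK.
split; first exact: (EBk 2%N n_gt0).
move=> k /andP[le3k lt_k]; have := EBk k lt_k.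
by rewrite le3k ifF; [move-> | lia].
Qed.

Lemma identity_e1h2_coords : Z = lbr Z (vH2 n) - lbr Y (vE n 1) ->
  [/\ Z 0 (inord 0) = 0, Z 0 (inord 1) = 0 & Y 0 (inord 1) = 0].
Proof.
move=> EC; have ECk k : (k < n.+2)%N -> Z 0 (inord k) =
    (if k == 2%N then Z 0 (inord k) else if (3 <= k)%N then k.-2%:R * Z 0 (inord k) else 0) -
    (if k == 2%N then - Y 0 (inord 1) else if (4 <= k)%N then Y 0 (inord k.-1) else 0).
  move=> lt_k; move/(congr1 (fun v : 'rV[CC]_n.+2 => v 0 (inord k))): EC.
  by rewrite !mxE lbr_vH2_entry // lbr_vE1_entry // inordK.
split.
- by rewrite (ECk 0%N isT) subr0.
- by rewrite (ECk 1%N isT) subr0.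
- by apply: (addrI (Z 0 (inord 2))); rewrite addr0 {2}(ECk 2%N n_gt0) /= opprK.
Qed.

Lemma forms_of_identities : generator_identities X Y Z ->
  exists beta gamma1 gamma2,
    [/\ X = antider_h1 n beta gamma1, Y = antider_h2 n beta gamma2 & Z = antider_e1 n beta].
Proof.
case=> /identity_h1e1_coords[X1 Z3 ZX] /identity_h1h2_coords[X2 YX].
move=> /identity_e1h2_coords[Z0 Z1 Y1].
(* beta_1 and beta_2 are the e_1-coefficients of D e_1 and D h_2; every other
   beta_k is the e_(k-1)-coefficient of D h_1. *)
pose beta k := if k == 1%N then Z 0 (inord 2)
               else if k == 2%N then Y 0 (inord 2) else X 0 (inord k).
exists beta, (X 0 (inord 0)), (Y 0 (inord 0)).
split; apply/rowP => j; rewrite entry_inord.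
- by rewrite antider_h1_entry //; case: j => [[|[|[|k]]] lt_k].
- rewrite antider_h2_entry //; case: j => [[|[|[|k]]] lt_k] //=.
  by rewrite YX.
- rewrite antider_e1_entry //; case: j => [[|[|[|[|k]]]] lt_k] //=.
  by rewrite ZX.
Qed.

Lemma identities_of_forms beta gamma1 gamma2 :
  generator_identities (antider_h1 n beta gamma1) (antider_h2 n beta gamma2) (antider_e1 n beta).
Proof.
split; apply/rowP => j.
- rewrite lbr_vE1_entry // lbr_vH1_entry // !antider_h1_entry // antider_e1_entry //.
  rewrite !inordK //; last by have := ltn_ord j; lia.
  by case: j => [[|[|[|[|k]]]] lt_k] //=; rewrite oppr0.
- rewrite lbr_vH2_entry // lbr_vH1_entry // antider_h1_entry // antider_h2_entry //.
  by case: j => [[|[|[|k]]] lt_k].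
rewrite antider_e1_entry // !mxE lbr_vH2_entry // lbr_vE1_entry // antider_e1_entry //.
rewrite !antider_h2_entry // !inordK //; last by have := ltn_ord j; lia.
case: j => [[|[|[|[|k]]]] lt_k] /=; rewrite ?oppr0 ?subr0 ?mulr0 ?addr0 //.
by rewrite -mulrBl -natrB // subSnn mul1r.
Qed.

End Identities.

Theorem mainTheorem10 (n : nat) (hn : (4 <= n)%N)
    (D : {linear 'rV[CC]_n.+2 -> 'rV[CC]_n.+2}) :
  anti_derivation D <->
  exists (beta : nat -> CC) (gamma1 gamma2 : CC),
    [/\ D (vH1 n) = gamma1 *: vH1 n + \sum_(2 <= i < n.+1) beta i.+1 *: vE n i,
        D (vH2 n) = gamma2 *: vH1 n + beta 2%N *: vE n 1
                    + \sum_(2 <= i < n.+1) ((i.-1)%:R * beta i.+1) *: vE n i,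
        D (vE n 1) = beta 1%N *: vE n 1 + \sum_(3 <= i < n.+1) beta i *: vE n i
      & forall i : nat, (2 <= i <= n)%N -> D (vE n i) = 0].
Proof.
have n_gt0 : (0 < n)%N by lia.
have n_ge2 : (2 <= n)%N by lia.
split=> [/(anti_derivation_generatorsP n_gt0)[De /(forms_of_identities n_ge2)] | ].
  by case=> beta [gamma1 [gamma2 [DX DY DZ]]]; exists beta, gamma1, gamma2.
case=> beta [gamma1 [gamma2 [DX DY DZ De]]].
apply/(anti_derivation_generatorsP n_gt0); split=> //.
by rewrite DX DY DZ; apply: identities_of_forms.
Qed.
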